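(* Let $D>0$, $g>0$, $l_{\mathrm{c}}>0$, $c_{\infty}>0$ and $c_{\mathrm{s}}\ge 0$ be constants, and consider pairs $(l_{\infty},c)$ with $l_{\infty}>0$ and $c\in C^2([0,l_{\infty}])$ satisfying \[ D c''(x)-g c(x)=0\ (0<x<l_{\infty}),\qquad D c'(l_{\infty})=-gl_{\mathrm{c}}c_{\infty},\qquad c(l_{\infty})=c_{\infty},\qquad c(0)=c_{\mathrm{s}} \] (steady-state solutions). Such a pair exists if and only if $c_{\mathrm{s}}>c_{\infty}$. In that case the steady-state solution is unique: $l_{\infty}>0$ is uniquely determined and \[ c(x)=\frac{c_{\infty}}{2}\left[\left(1-l_{\mathrm{c}}\sqrt{\tfrac{g}{D}}\right)\mathrm{e}^{(x-l_{\infty})\sqrt{g/D}}+\left(1+l_{\mathrm{c}}\sqrt{\tfrac{g}{D}}\right)\mathrm{e}^{-(x-l_{\infty})\sqrt{g/D}}\right],\quad 0\le x\le l_{\infty}, \] which is a decreasing function.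
   Context: This is the steady-state problem of a one-dimensional axonal growth model without active transport ($a=0$): $D$ is the diffusion coefficient, $g$ the degradation rate, $l_{\mathrm{c}}$ the characteristic growth-cone length, $c_{\infty}$ the steady-state growth cone concentration, $c_{\mathrm{s}}$ the soma concentration, and $l_{\infty}$ the axon length. The length $l_{\infty}$ is the unique positive solution of $\frac12\left[\left(1-l_{\mathrm{c}}\sqrt{g/D}\right)\mathrm{e}^{-l_{\infty}\sqrt{g/D}}+\left(1+l_{\mathrm{c}}\sqrt{g/D}\right)\mathrm{e}^{l_{\infty}\sqrt{g/D}}\right]=c_{\mathrm{s}}/c_{\infty}$. *)

From Stdlib Require Import Reals.
From Coquelicot Require Import Coquelicot.
Open Scope R_scope.

Definition has_deriv_on (f f' : R -> R) (a b : R) : Prop :=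
  forall x, a <= x <= b ->
    filterlim (fun h => (f (x + h) - f x) / h)
      (within (fun h => h <> 0 /\ a <= x + h <= b) (locally 0))
      (locally (f' x)).

Definition continuous_on_cc (f : R -> R) (a b : R) : Prop :=
  forall x, a <= x <= b ->
    filterlim f (within (fun y => a <= y <= b) (locally x)) (locally (f x)).

Definition steady_state (D g lc cinf cs : R) (l : R) (c : R -> R) : Prop :=
  0 < l /\
  exists c1 c2 : R -> R,
    has_deriv_on c c1 0 l /\ has_deriv_on c1 c2 0 l /\ continuous_on_cc c2 0 l /\
    (forall x, 0 < x < l -> D * c2 x - g * c x = 0) /\
    D * c1 l = - g * lc * cinf /\
    c l = cinf /\
    c 0 = cs.

Definition profile (D g lc cinf l : R) (x : R) : R :=
  cinf / 2 *
  ((1 - lc * sqrt (g / D)) * exp ((x - l) * sqrt (g / D)) +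
   (1 + lc * sqrt (g / D)) * exp (- ((x - l) * sqrt (g / D)))).

From Stdlib Require Import Reals Lra.
From Coquelicot Require Import Coquelicot.
Open Scope R_scope.

(* Write k = sqrt (g / D).  If c solves D c'' = g c and has the same value and
   slope at l as the profile, their difference w has the first integrals
   (w' - k w) e^(k x) and (w' + k w) e^(-k x), which are constant and vanish at
   l, so w = 0: a steady state must be the given profile.  In terms of the depth
   t = (l - x) k the profile is cinf (cosh t + lc k sinh t), strictly increasing
   in t.  Hence it decreases in x, and its value at the soma increases strictly
   from cinf (for l = 0) to +oo as l grows, so c(0) = cs has exactly one
   positive solution l when cs > cinf and none otherwise. *)

Lemma ball_Rabs (x e y : R) : ball x e y <-> Rabs (y - x) < e.
Proof. reflexivity. Qed.

Lemma has_deriv_on_of_is_derive (f f' : R -> R) (a b : R) :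
  (forall x, is_derive f x (f' x)) -> has_deriv_on f f' a b.
Proof.
  intros Hf x _. apply filterlim_locally. intros eps.
  destruct (proj1 (is_derive_Reals f x (f' x)) (Hf x) eps (cond_pos eps)) as [d Hd].
  exists d. intros h Hh [Hh0 _]. apply ball_Rabs, Hd; [exact Hh0|].
  change (Rabs (h - 0) < d) in Hh. now rewrite Rminus_0_r in Hh.
Qed.

Lemma has_deriv_on_is_derive (f f' : R -> R) (a b x : R) :
  has_deriv_on f f' a b -> a < x < b -> is_derive f x (f' x).
Proof.
  intros Hf Hx. apply is_derive_Reals. intros eps Heps.
  assert (Hin : locally 0 (fun h => a <= x + h <= b)).
  { apply (locally_interval _ 0 (a - x) (b - x)); simpl; intros; lra. }
  assert (Hq := Hf x ltac:(lra)). rewrite filterlim_locally in Hq.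
  destruct (filter_and _ _ Hin (Hq (mkposreal eps Heps))) as [d Hd].
  exists d. intros h Hh0 Hh.
  assert (Hball : ball 0 d h) by (apply ball_Rabs; now rewrite Rminus_0_r).
  destruct (Hd h Hball) as [Hab Hlim].
  exact (proj1 (ball_Rabs _ _ _) (Hlim (conj Hh0 Hab))).
Qed.

Lemma has_deriv_on_continuous_on_cc (f f' : R -> R) (a b : R) :
  has_deriv_on f f' a b -> continuous_on_cc f a b.
Proof.
  intros Hf x Hx.
  set (F := within (fun h => h <> 0 /\ a <= x + h <= b) (locally 0)).
  assert (Hinc : filterlim (fun h => f (x + h) - f x) F (locally 0)).
  { apply (filterlim_ext_loc (fun h => (f (x + h) - f x) / h * h)).
    - unfold F, within. apply filter_forall. intros h [Hh0 _]. field. exact Hh0.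
    - assert (Hmul := filterlim_mult (K := R_AbsRing) (f' x) 0).
      change (mult (f' x) 0) with (f' x * 0) in Hmul. rewrite Rmult_0_r in Hmul.
      refine (filterlim_comp_2 _ _ Rmult (Hf x Hx) _ Hmul).
      exact (filterlim_filter_le_1 _ (filter_le_within _) (filterlim_id _ _)). }
  apply filterlim_locally. intros eps.
  rewrite filterlim_locally in Hinc. destruct (Hinc eps) as [d Hd].
  exists d. intros y Hy Hyab.
  destruct (Req_dec y x) as [->|Hne]; [apply ball_center|].
  assert (Hyx := Hd (y - x)). rewrite Rplus_minus in Hyx.
  apply ball_Rabs. rewrite <- (Rminus_0_r (f y - f x)). apply ball_Rabs, Hyx.
  - apply ball_Rabs. rewrite Rminus_0_r. exact Hy.
  - split; [lra | exact Hyab].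
Qed.

Lemma continuous_on_cc_of_continuous (f : R -> R) (a b : R) :
  (forall x, continuous f x) -> continuous_on_cc f a b.
Proof.
  intros Hf x _. exact (filterlim_filter_le_1 _ (filter_le_within _) (Hf x)).
Qed.

Lemma continuous_on_cc_plus (f g : R -> R) (a b : R) :
  continuous_on_cc f a b -> continuous_on_cc g a b ->
  continuous_on_cc (fun x => f x + g x) a b.
Proof.
  intros Hf Hg x Hx.
  exact (filterlim_comp_2 f g Rplus (Hf x Hx) (Hg x Hx) (filterlim_plus (f x) (g x))).
Qed.

Lemma continuous_on_cc_mult (f g : R -> R) (a b : R) :
  continuous_on_cc f a b -> continuous_on_cc g a b ->
  continuous_on_cc (fun x => f x * g x) a b.
Proof.
  intros Hf Hg x Hx.
  exact (filterlim_comp_2 f g Rmult (Hf x Hx) (Hg x Hx) (filterlim_mult (f x) (g x))).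
Qed.

Lemma continuous_on_cc_minus (f g : R -> R) (a b : R) :
  continuous_on_cc f a b -> continuous_on_cc g a b ->
  continuous_on_cc (fun x => f x - g x) a b.
Proof.
  intros Hf Hg. apply (continuous_on_cc_plus f (fun x => - g x)); [exact Hf|].
  intros x Hx. eapply filterlim_comp; [exact (Hg x Hx) | exact (filterlim_opp (g x))].
Qed.

Lemma continuous_on_cc_eq_const (f : R -> R) (a b C : R) :
  a < b -> continuous_on_cc f a b -> (forall x, a < x < b -> f x = C) ->
  forall x, a <= x <= b -> f x = C.
Proof.
  intros Hab Hf HC x Hx.
  (* At an endpoint, take the limit along the one-sided filter, which lives in (a,b). *)
  assert (Hlim : forall G, ProperFilter G -> filter_le G (locally x) ->
    G (fun y => a < y < b) -> f x = C).
  { intros G HG Hle Hin. apply (filterlim_locally_unique (F := G) f).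
    - intros Q HQ. change (G (fun y => Q (f y))).
      apply (filter_imp (fun y => (a <= y <= b -> Q (f y)) /\ a < y < b)).
      + intros y [HQy Hy]. apply HQy. lra.
      + apply filter_and; [exact (Hle _ (Hf x Hx Q HQ)) | exact Hin].
    - apply (filterlim_ext_loc (fun _ => C)); [|apply filterlim_const].
      apply (filter_imp _ _ (fun y Hy => eq_sym (HC y Hy)) Hin). }
  destruct (Req_dec x b) as [->|Hxb]; [|destruct (Req_dec x a) as [->|Hxa]].
  - apply (Hlim (at_left b)); [apply at_left_proper_filter | apply filter_le_within |].
    apply (locally_interval _ b a p_infty); simpl; intros; lra.
  - apply (Hlim (at_right a)); [apply at_right_proper_filter | apply filter_le_within |].
    apply (locally_interval _ a m_infty b); simpl; intros; lra.
  - apply HC. lra.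
Qed.

Lemma continuous_on_cc_derive_0_const (f : R -> R) (a b : R) :
  a < b -> continuous_on_cc f a b -> (forall x, a < x < b -> is_derive f x 0) ->
  forall x, a <= x <= b -> f x = f b.
Proof.
  intros Hab Hf Hd.
  set (m := (a + b) / 2).
  assert (Hmid : forall x, a < x < b -> f x = f m).
  { intros x Hx.
    assert (Hsub : forall y, Rmin m x <= y <= Rmax m x -> a < y < b).
    { intros y Hy.
      assert (a < Rmin m x) by (apply Rmin_glb_lt; unfold m; lra).
      assert (Rmax m x < b) by (apply Rmax_lub_lt; unfold m; lra).
      lra. }
    destruct (MVT_gen f m x (fun _ => 0)) as [c [_ Hc]]; [| |lra].
    - intros y Hy. apply Hd, Hsub. lra.
    - intros y Hy. apply continuity_pt_filterlim.
      apply (ex_derive_continuous (K := R_AbsRing) (V := R_NormedModule)).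
      exists 0. apply Hd, Hsub, Hy. }
  intros x Hx.
  rewrite (continuous_on_cc_eq_const f a b (f m) Hab Hf Hmid x Hx).
  symmetry. apply (continuous_on_cc_eq_const f a b (f m) Hab Hf Hmid). lra.
Qed.

(* (w1 - r w) e^(r x) has derivative (q - r^2) w e^(r x) = 0. *)
Lemma linear_ode_first_integral (w w1 : R -> R) (a b q r : R) :
  a < b -> r * r = q ->
  continuous_on_cc w a b -> continuous_on_cc w1 a b ->
  (forall x, a < x < b -> is_derive w x (w1 x) /\ is_derive w1 x (q * w x)) ->
  w b = 0 -> w1 b = 0 ->
  forall x, a <= x <= b -> w1 x = r * w x.
Proof.
  intros Hab Hr Hw Hw1 Hder Hwb Hw1b.
  set (E := fun x => (w1 x - r * w x) * exp (r * x)).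
  assert (HdE : forall x, a < x < b -> is_derive E x 0).
  { intros x Hx. destruct (Hder x Hx) as [Dw Dw1].
    replace 0 with ((q * w x - r * w1 x) * exp (r * x) + (w1 x - r * w x) * (r * exp (r * x)))
      by (rewrite <- Hr; ring).
    apply (is_derive_mult (fun x => w1 x - r * w x) (fun x => exp (r * x))).
    - apply (is_derive_minus w1 (fun x => r * w x)); [exact Dw1 | now apply is_derive_scal].
    - auto_derive; [exact I | ring].
    - intros; apply Rmult_comm. }
  assert (HcE : continuous_on_cc E a b).
  { apply continuous_on_cc_mult.
    - apply continuous_on_cc_minus; [exact Hw1 |].
      apply continuous_on_cc_mult; [|exact Hw].
      apply continuous_on_cc_of_continuous. intros; apply continuous_const.
    - apply continuous_on_cc_of_continuous. intros y.
      apply (ex_derive_continuous (K := R_AbsRing) (V := R_NormedModule)).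
      auto_derive. exact I. }
  intros x Hx.
  assert (HEx := continuous_on_cc_derive_0_const E a b Hab HcE HdE x Hx).
  unfold E in HEx. rewrite Hwb, Hw1b in HEx.
  replace ((0 - r * 0) * exp (r * b)) with 0 in HEx by ring.
  destruct (Rmult_integral _ _ HEx) as [H0 | H0].
  - lra.
  - pose proof (exp_pos (r * x)). lra.
Qed.

Lemma linear_ode_terminal_zero (w w1 : R -> R) (a b k : R) :
  a < b -> k <> 0 ->
  continuous_on_cc w a b -> continuous_on_cc w1 a b ->
  (forall x, a < x < b -> is_derive w x (w1 x) /\ is_derive w1 x (k * k * w x)) ->
  w b = 0 -> w1 b = 0 ->
  forall x, a <= x <= b -> w x = 0.
Proof.
  intros Hab Hk Hw Hw1 Hder Hwb Hw1b x Hx.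
  assert (Hp := linear_ode_first_integral w w1 a b _ k Hab eq_refl Hw Hw1 Hder Hwb Hw1b x Hx).
  assert (Hkk : - k * - k = k * k) by ring.
  assert (Hm := linear_ode_first_integral w w1 a b _ (- k) Hab Hkk Hw Hw1 Hder Hwb Hw1b x Hx).
  destruct (Rmult_integral (2 * k) (w x)) as [H0 | H0]; [lra | lra | exact H0].
Qed.

Lemma hyperbolic_combination_lt (m s t : R) :
  0 < m -> 0 <= s < t ->
  (1 - m) * exp (- s) + (1 + m) * exp s < (1 - m) * exp (- t) + (1 + m) * exp t.
Proof.
  intros Hm Hst. rewrite !exp_Ropp.
  assert (Hs := exp_pos s). assert (Hts := exp_increasing s t (proj2 Hst)).
  assert (Hprod : 1 <= exp s * exp t).
  { rewrite <- exp_plus. pose proof (exp_ineq1_le (s + t)). lra. }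
  set (E := exp s) in *. set (F := exp t) in *.
  assert (Hdiff : (1 - m) * / F + (1 + m) * F - ((1 - m) * / E + (1 + m) * E)
                  = (F - E) * ((1 + m) * (E * F) - (1 - m)) / (E * F)) by (field; lra).
  assert (0 < (F - E) * ((1 + m) * (E * F) - (1 - m)) / (E * F)).
  { apply Rdiv_lt_0_compat; [apply Rmult_lt_0_compat|]; nra. }
  lra.
Qed.

Lemma exp_lt_hyperbolic_combination (m t : R) :
  0 < m -> 0 <= t -> exp t < (1 - m) * exp (- t) + (1 + m) * exp t.
Proof.
  intros Hm Ht. rewrite exp_Ropp.
  assert (H1 : 1 <= exp t) by (pose proof (exp_ineq1_le t); lra).
  assert (Hinv : 0 < / exp t <= 1).
  { split; [apply Rinv_0_lt_compat; lra|]. rewrite <- Rinv_1. apply Rinv_le_contravar; lra. }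
  nra.
Qed.

Definition profile_slope (D g lc cinf l x : R) : R :=
  cinf / 2 * sqrt (g / D) *
  ((1 - lc * sqrt (g / D)) * exp ((x - l) * sqrt (g / D)) -
   (1 + lc * sqrt (g / D)) * exp (- ((x - l) * sqrt (g / D)))).

Lemma sqrt_ratio_pos (D g : R) : 0 < D -> 0 < g -> 0 < sqrt (g / D).
Proof. intros HD Hg. apply sqrt_lt_R0, Rdiv_lt_0_compat; assumption. Qed.

Lemma sqrt_ratio_sqr (D g : R) : 0 < D -> 0 <= g -> sqrt (g / D) * sqrt (g / D) = g / D.
Proof. intros HD Hg. apply sqrt_sqrt. unfold Rdiv. apply Rmult_le_pos; [|apply Rlt_le, Rinv_0_lt_compat]; assumption. Qed.

Lemma is_derive_profile (D g lc cinf l x : R) :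
  is_derive (profile D g lc cinf l) x (profile_slope D g lc cinf l x).
Proof. unfold profile, profile_slope. auto_derive; [exact I | unfold Rminus; ring]. Qed.

Lemma is_derive_profile_slope (D g lc cinf l x : R) :
  0 < D -> 0 <= g ->
  is_derive (profile_slope D g lc cinf l) x (g / D * profile D g lc cinf l x).
Proof.
  intros HD Hg. rewrite <- (sqrt_ratio_sqr D g HD Hg).
  unfold profile, profile_slope. auto_derive; [exact I | unfold Rminus; ring].
Qed.

Lemma continuous_profile (D g lc cinf l x : R) : continuous (profile D g lc cinf l) x.
Proof.
  apply (ex_derive_continuous (K := R_AbsRing) (V := R_NormedModule)).
  eexists. apply is_derive_profile.
Qed.

Lemma profile_at_tip (D g lc cinf l : R) : profile D g lc cinf l l = cinf.
Proof. unfold profile. rewrite Rminus_eq_0, Rmult_0_l, Ropp_0, exp_0. field. Qed.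

Lemma profile_slope_at_tip (D g lc cinf l : R) :
  0 < D -> 0 <= g -> D * profile_slope D g lc cinf l l = - g * lc * cinf.
Proof.
  intros HD Hg. unfold profile_slope. rewrite Rminus_eq_0, Rmult_0_l, Ropp_0, exp_0.
  assert (Hkk := sqrt_ratio_sqr D g HD Hg). set (k := sqrt (g / D)) in *.
  replace g with (D * (k * k)) by (rewrite Hkk; field; lra).
  field.
Qed.

Lemma profile_lt (D g lc cinf l x l' x' : R) :
  0 < D -> 0 < g -> 0 < lc -> 0 < cinf -> 0 <= l - x < l' - x' ->
  profile D g lc cinf l x < profile D g lc cinf l' x'.
Proof.
  intros HD Hg Hlc Hc Hdepth. unfold profile.
  assert (Hk := sqrt_ratio_pos D g HD Hg). set (k := sqrt (g / D)) in *.
  replace ((x - l) * k) with (- ((l - x) * k)) by ring.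
  replace ((x' - l') * k) with (- ((l' - x') * k)) by ring.
  rewrite !Ropp_involutive.
  apply Rmult_lt_compat_l; [lra|].
  apply hyperbolic_combination_lt; nra.
Qed.

Lemma profile_origin_inj (D g lc cinf l l' : R) :
  0 < D -> 0 < g -> 0 < lc -> 0 < cinf -> 0 <= l -> 0 <= l' ->
  profile D g lc cinf l 0 = profile D g lc cinf l' 0 -> l = l'.
Proof.
  intros HD Hg Hlc Hc Hl Hl' Heq.
  destruct (Rtotal_order l l') as [Hlt | [Heql | Hgt]]; [exfalso | exact Heql | exfalso].
  - pose proof (profile_lt D g lc cinf l 0 l' 0 HD Hg Hlc Hc ltac:(lra)). lra.
  - pose proof (profile_lt D g lc cinf l' 0 l 0 HD Hg Hlc Hc ltac:(lra)). lra.
Qed.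

Lemma profile_origin_surj (D g lc cinf cs : R) :
  0 < D -> 0 < g -> 0 < lc -> 0 < cinf -> cinf < cs ->
  exists l, 0 < l /\ profile D g lc cinf l 0 = cs.
Proof.
  intros HD Hg Hlc Hc Hcs.
  set (f := fun l => profile D g lc cinf l 0).
  assert (Hk := sqrt_ratio_pos D g HD Hg). set (k := sqrt (g / D)) in *.
  (* Then cinf/2 e^(L k) >= cinf/2 (1 + L k) = cinf/2 + cs. *)
  set (L := 2 * cs / (cinf * k)).
  assert (HL : 0 < L) by (apply Rdiv_lt_0_compat; nra).
  assert (Hf0 : f 0 = cinf) by apply profile_at_tip.
  assert (HfL : cs < f L).
  { unfold f, profile. fold k.
    replace ((0 - L) * k) with (- (L * k)) by ring. rewrite Ropp_involutive.
    assert (Hhyp := exp_lt_hyperbolic_combination (lc * k) (L * k) ltac:(nra) ltac:(nra)).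
    assert (HLk : L * k = 2 * cs / cinf) by (unfold L; field; lra).
    assert (Hexp := exp_ineq1_le (L * k)). rewrite HLk in Hexp, Hhyp |- *.
    apply Rlt_trans with (cinf / 2 * exp (2 * cs / cinf)).
    - assert (cinf * (2 * cs / cinf) = 2 * cs) by (field; lra). nra.
    - apply Rmult_lt_compat_l; [lra | exact Hhyp]. }
  assert (Hcont : continuity f).
  { intros l. apply continuity_pt_filterlim.
    apply (ex_derive_continuous (K := R_AbsRing) (V := R_NormedModule)).
    unfold f, profile. auto_derive. exact I. }
  destruct (IVT_gen f 0 L cs Hcont) as [l [Hl Hfl]].
  { rewrite Rmin_left, Rmax_right; lra. }
  rewrite Rmin_left, Rmax_right in Hl by lra.
  exists l. split; [|exact Hfl].
  destruct (Req_dec l 0) as [-> | Hl0]; lra.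
Qed.

Lemma profile_steady_state (D g lc cinf l : R) :
  0 < D -> 0 < g -> 0 < l ->
  steady_state D g lc cinf (profile D g lc cinf l 0) l (profile D g lc cinf l).
Proof.
  intros HD Hg Hl. split; [exact Hl|].
  exists (profile_slope D g lc cinf l), (fun x => g / D * profile D g lc cinf l x).
  split; [apply has_deriv_on_of_is_derive; intros; apply is_derive_profile|].
  split; [apply has_deriv_on_of_is_derive; intros; apply is_derive_profile_slope; lra|].
  split.
  { apply continuous_on_cc_of_continuous. intros x.
    apply (ex_derive_continuous (K := R_AbsRing) (V := R_NormedModule)).
    eexists. apply is_derive_scal, is_derive_profile. }
  split; [intros x _; field; lra|].
  split; [apply profile_slope_at_tip; lra|].
  split; [apply profile_at_tip | reflexivity].
Qed.

Lemma steady_state_eq_profile (D g lc cinf cs l : R) (c : R -> R) :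
  0 < D -> 0 < g -> steady_state D g lc cinf cs l c ->
  forall x, 0 <= x <= l -> c x = profile D g lc cinf l x.
Proof.
  intros HD Hg [Hl [c1 [c2 [Hc [Hc1 [_ [Hode [Hc1l [Hcl _]]]]]]]]] x Hx.
  set (p := profile D g lc cinf l). set (p1 := profile_slope D g lc cinf l).
  assert (Hk := sqrt_ratio_pos D g HD Hg).
  assert (Hkk := sqrt_ratio_sqr D g HD (Rlt_le _ _ Hg)).
  enough (Hw : c x - p x = 0) by lra.
  apply (linear_ode_terminal_zero (fun x => c x - p x) (fun x => c1 x - p1 x) 0 l (sqrt (g / D)));
    [exact Hl | lra | | | | | | exact Hx].
  - apply continuous_on_cc_minus; [exact (has_deriv_on_continuous_on_cc _ _ _ _ Hc)|].
    apply continuous_on_cc_of_continuous, continuous_profile.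
  - apply continuous_on_cc_minus; [exact (has_deriv_on_continuous_on_cc _ _ _ _ Hc1)|].
    apply continuous_on_cc_of_continuous. intros y.
    apply (ex_derive_continuous (K := R_AbsRing) (V := R_NormedModule)).
    eexists. apply is_derive_profile_slope; lra.
  - intros y Hy. split.
    + apply (is_derive_minus c p); [exact (has_deriv_on_is_derive _ _ _ _ _ Hc Hy)|].
      apply is_derive_profile.
    + replace (sqrt (g / D) * sqrt (g / D) * (c y - p y)) with (c2 y - g / D * p y).
      2: { assert (Hc2 : c2 y = g / D * c y) by (specialize (Hode y Hy); field_simplify_eq; lra).
           rewrite Hkk, Hc2. ring. }
      apply (is_derive_minus c1 p1); [exact (has_deriv_on_is_derive _ _ _ _ _ Hc1 Hy)|].
      apply is_derive_profile_slope; lra.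
  - unfold p. rewrite Hcl, profile_at_tip. ring.
  - apply (Rmult_eq_reg_l D); [|lra]. unfold p1.
    rewrite Rmult_minus_distr_l, Hc1l, profile_slope_at_tip by lra. ring.
Qed.

Lemma steady_state_soma (D g lc cinf cs l : R) (c : R -> R) :
  0 < D -> 0 < g -> steady_state D g lc cinf cs l c -> profile D g lc cinf l 0 = cs.
Proof.
  intros HD Hg Hs. pose proof Hs as [Hl [c1 [c2 (_ & _ & _ & _ & _ & _ & Hc0)]]].
  rewrite <- Hc0. symmetry. apply (steady_state_eq_profile D g lc cinf cs l c HD Hg Hs). lra.
Qed.

Theorem theorem2 (D g lc cinf cs : R) :
  0 < D -> 0 < g -> 0 < lc -> 0 < cinf -> 0 <= cs ->
  ((exists (l : R) (c : R -> R), steady_state D g lc cinf cs l c) <-> cinf < cs) /\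
  (cinf < cs ->
   exists l : R,
     (exists c : R -> R, steady_state D g lc cinf cs l c) /\
     (forall (l' : R) (c : R -> R), steady_state D g lc cinf cs l' c ->
        l' = l /\ forall x, 0 <= x <= l -> c x = profile D g lc cinf l x) /\
     (forall x y, 0 <= x -> x < y -> y <= l ->
        profile D g lc cinf l y < profile D g lc cinf l x)).
Proof.
  intros HD Hg Hlc Hc _.
  split; [split|].
  - intros [l [c Hs]]. rewrite <- (steady_state_soma D g lc cinf cs l c HD Hg Hs).
    rewrite <- (profile_at_tip D g lc cinf 0) at 1.
    apply profile_lt; destruct Hs; lra.
  - intros Hcs. destruct (profile_origin_surj D g lc cinf cs HD Hg Hlc Hc Hcs) as [l [Hl <-]].
    exists l, (profile D g lc cinf l). exact (profile_steady_state D g lc cinf l HD Hg Hl).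
  - intros Hcs. destruct (profile_origin_surj D g lc cinf cs HD Hg Hlc Hc Hcs) as [l [Hl Hcsl]].
    exists l. split; [|split].
    + exists (profile D g lc cinf l). rewrite <- Hcsl.
      exact (profile_steady_state D g lc cinf l HD Hg Hl).
    + intros l' c Hs.
      assert (Hll' : l' = l).
      { apply (profile_origin_inj D g lc cinf); [assumption.. | destruct Hs; lra | lra |].
        rewrite (steady_state_soma D g lc cinf cs l' c HD Hg Hs). exact (eq_sym Hcsl). }
      subst l'. split; [reflexivity|].
      exact (steady_state_eq_profile D g lc cinf cs l c HD Hg Hs).
    + intros x y Hx Hxy Hyl. apply profile_lt; lra.
Qed.
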